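(* Let $n,m\in\mathbb{N}$, $W_0\in\mathbb{R}^{n\times m}$, and $1\le r<\operatorname{rank}(W_0)\le\min(n,m)$. Let $W_0=U\Sigma_0V^T$ be a singular value decomposition with $U\in\mathbb{R}^{n\times n}$, $V\in\mathbb{R}^{m\times m}$ orthogonal, $\Sigma_0\in\mathbb{R}^{n\times m}$ diagonal with singular values $s_{0,1}\ge s_{0,2}\ge\dots\ge s_{0,\min(n,m)}\ge 0$, and let $\mathbf{u}_i,\mathbf{v}_i$ denote the $i$-th columns of $U,V$. Assume the LoRA gradient-descent iterates for $\min_{B\in\mathbb{R}^{n\times r},A\in\mathbb{R}^{r\times m}}\frac12\|W_0-BA\|^2$ remain uniformly bounded. Let $\tilde X_0\in\mathbb{R}^{r\times m}$ have all off-diagonal entries zero and all diagonal entries $\tilde x_{ii}(0)$, $i=1,\dots,r$, nonzero (e.g. drawn i.i.d. from $\mathcal{N}(0,\sigma^2)$, $\sigma^2>0$). Let $(Y,X)$ solve the gradient flow $$Y'(t)=\big(W_0-Y(t)X(t)\big)X(t)^T,\quad X'(t)=Y(t)^T\big(W_0-Y(t)X(t)\big),\quad Y(0)=\mathbf{0}_{n\times r},\ X(0)=\tilde X_0V^T.$$ Then $$\lim_{t\to\infty}Y(t)X(t)=\sum_{i=1}^r s_{0,i}\,\mathbf{u}_i\mathbf{v}_i^T\qquad\text{and}\qquad \lim_{t\to\infty}\|W_0-Y(t)X(t)\|^2=\sum_{i=r+1}^{\min(n,m)}s_{0,i}^2,$$ i.e. the flow converges to the optimal rank-$r$ approximation of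 $W_0$ and attains the optimal rank-$r$ approximation error given by the Eckart--Young--Mirsky theorem; this is also the approximation error between the converged rank-$r$ solution and the full-rank solution $W_0$.
   Context: $\|\cdot\|$ is the Frobenius norm. ''LoRA gradient-descent iterates'' are the iterates of fixed-step gradient descent on the factors $B,A$ of $g(B,A)=\frac12\|W_0-BA\|^2$; uniform boundedness means their Frobenius norms are bounded independently of step size and iteration. The initialization corresponds to $\tilde Y(0)=U^TY(0)=\mathbf{0}$ and $\tilde X(0)=X(0)V=\tilde X_0$ (spectral initialization). *)

From HB Require Import structures.
From mathcomp Require Import all_boot all_order all_algebra.
From mathcomp Require Import all_classical all_reals all_analysis.
Set Implicit Arguments. Unset Strict Implicit. Unset Printing Implicit Defensive.
Import Order.TTheory GRing.Theory Num.Theory.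
Import numFieldNormedType.Exports.
Local Open Scope ring_scope.

Definition frob2 (R : realType) (p q : nat) (A : 'M[R]_(p, q)) : R :=
  \sum_(i < p) \sum_(j < q) A i j ^+ 2.

Definition frob (R : realType) (p q : nat) (A : 'M[R]_(p, q)) : R :=
  Num.sqrt (frob2 A).

(* Fixed-step gradient descent (step eta) on the LoRA factors (B, A) of
   g(B,A) = 1/2 ||W0 - B A||^2, started at (B0, A0):
     B_{k+1} = B_k + eta (W0 - B_k A_k) A_k^T,
     A_{k+1} = A_k + eta B_k^T (W0 - B_k A_k). *)
Fixpoint lora_gd (R : realType) (n m r : nat) (W0 : 'M[R]_(n, m))
    (B0 : 'M[R]_(n, r)) (A0 : 'M[R]_(r, m)) (eta : R) (k : nat)
    : 'M[R]_(n, r) * 'M[R]_(r, m) :=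
  match k with
  | 0 => (B0, A0)
  | k'.+1 =>
      let BA := lora_gd W0 B0 A0 eta k' in
      let B := BA.1 in let A := BA.2 in
      (B + eta *: ((W0 - B *m A) *m A^T), A + eta *: (B^T *m (W0 - B *m A)))
  end.

Definition lora_gd_bounded (R : realType) (n m r : nat) (W0 : 'M[R]_(n, m))
    (B0 : 'M[R]_(n, r)) (A0 : 'M[R]_(r, m)) : Prop :=
  exists2 eta0 : R, 0 < eta0 &
  exists M : R, forall eta : R, 0 < eta -> eta <= eta0 -> forall k : nat,
    frob (lora_gd W0 B0 A0 eta k).1 <= M /\ frob (lora_gd W0 B0 A0 eta k).2 <= M.

From HB Require Import structures.
From mathcomp Require Import all_boot all_order all_algebra.
From mathcomp Require Import all_classical all_reals all_analysis.
From mathcomp Require Import ring lra.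
Import Order.TTheory GRing.Theory Num.Theory.
Import numFieldNormedType.Exports.
Local Open Scope ring_scope.
Local Open Scope classical_set_scope.
Set Implicit Arguments. Unset Strict Implicit. Unset Printing Implicit Defensive.

(* The flow is equivariant under orthogonal changes of coordinates
   (Y, X) |-> (P Y Q^T, Q X Z^T) fixing the target, and its solutions are unique
   (Gronwall).  In singular coordinates U^T Y, X V the target is the rectangular
   diagonal matrix of singular values, which every sign flip of one coordinate
   fixes; as the initial data are diagonal too, uniqueness keeps the solution
   diagonal.  The flow then decouples into the scalar systems
   y' = (s - y x) x, x' = y (s - y x), along which x^2 - y^2 is conserved, equal to
   x(0)^2 > 0 since y(0) = 0; hence the residual s - y x decays like
   exp(- x(0)^2 t). *)

Section Frobenius.
Variable R : realType.
Implicit Types p q k : nat.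

Definition frob_dot p q (A B : 'M[R]_(p, q)) : R := \sum_i \sum_j A i j * B i j.

Lemma frob2_ge0 p q (A : 'M[R]_(p, q)) : 0 <= frob2 A.
Proof. by apply: sumr_ge0 => i _; apply: sumr_ge0 => j _; apply: sqr_ge0. Qed.

Lemma frob2_le0 p q (A : 'M[R]_(p, q)) : frob2 A <= 0 -> A = 0.
Proof.
move=> A0; have /eqP : frob2 A = 0 by apply/le_anti; rewrite A0 frob2_ge0.
rewrite psumr_eq0 => [/allP rows|i _]; last by apply: sumr_ge0 => j _; exact: sqr_ge0.
apply/matrixP => i j; move/implyP: (rows i (mem_index_enum _)) => /(_ isT).
rewrite psumr_eq0 => [/allP cols|l _]; last exact: sqr_ge0.
by move/implyP: (cols j (mem_index_enum _)) => /(_ isT); rewrite sqrf_eq0 mxE => /eqP.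
Qed.

Lemma frob2_0 p q : frob2 (0 : 'M[R]_(p, q)) = 0.
Proof. by apply: big1 => i _; apply: big1 => j _; rewrite mxE expr0n. Qed.

Lemma frob2N p q (A : 'M[R]_(p, q)) : frob2 (- A) = frob2 A.
Proof. by apply: eq_bigr => i _; apply: eq_bigr => j _; rewrite mxE sqrrN. Qed.

Lemma frob2_trmx p q (A : 'M[R]_(p, q)) : frob2 A^T = frob2 A.
Proof.
by rewrite /frob2 exchange_big; apply: eq_bigr => i _; apply: eq_bigr => j _; rewrite mxE.
Qed.

Lemma frob2D_le p q (A B : 'M[R]_(p, q)) : frob2 (A + B) <= 2 * (frob2 A + frob2 B).
Proof.
rewrite /frob2 -big_split mulr_sumr /=; apply: ler_sum => i _.
rewrite -big_split mulr_sumr /=; apply: ler_sum => j _.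
rewrite !mxE; have := sqr_ge0 (A i j - B i j); nra.
Qed.

Lemma frob2B_le p q (A B : 'M[R]_(p, q)) : frob2 (A - B) <= 2 * (frob2 A + frob2 B).
Proof. by rewrite -(frob2N B) frob2D_le. Qed.

Lemma frob_dot_le p q (A B : 'M[R]_(p, q)) : 2 * frob_dot A B <= frob2 A + frob2 B.
Proof.
rewrite mulr_sumr -big_split /=; apply: ler_sum => i _.
rewrite mulr_sumr -big_split /=; apply: ler_sum => j _.
have := sqr_ge0 (A i j - B i j); nra.
Qed.

Lemma cauchy_schwarz_sum k (a b : 'I_k -> R) :
  (\sum_i a i * b i) ^+ 2 <= (\sum_i a i ^+ 2) * (\sum_i b i ^+ 2).
Proof.
set A := \sum_i a i ^+ 2; set B := \sum_i b i ^+ 2; set C := \sum_i a i * b i.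
have row i : \sum_j (a i * b j - a j * b i) ^+ 2 =
    a i ^+ 2 * B + b i ^+ 2 * A - 2 * (a i * b i) * C.
  by rewrite /A /B /C !mulr_sumr -!big_split /= -sumrB; apply: eq_bigr => j _; ring.
have lagrange : \sum_i \sum_j (a i * b j - a j * b i) ^+ 2 = 2 * (A * B) - 2 * C ^+ 2.
  rewrite (eq_bigr _ (fun i _ => row i)) sumrB big_split /= -!mulr_suml.
  by rewrite -/A -/B -mulr_sumr -/C; ring.
have : 0 <= \sum_i \sum_j (a i * b j - a j * b i) ^+ 2.
  by apply: sumr_ge0 => i _; apply: sumr_ge0 => j _; apply: sqr_ge0.
rewrite lagrange; lra.
Qed.

Lemma frob2M_le p q k (A : 'M[R]_(p, q)) (B : 'M[R]_(q, k)) :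
  frob2 (A *m B) <= frob2 A * frob2 B.
Proof.
rewrite /frob2 mulr_suml; apply: ler_sum => i _.
rewrite [X in _ * X]exchange_big mulr_sumr; apply: ler_sum => j _.
rewrite mxE; exact: cauchy_schwarz_sum.
Qed.

Lemma frob2M3_le p q k l (A : 'M[R]_(p, q)) (B : 'M[R]_(q, k)) (C : 'M[R]_(k, l))
    (a b c : R) :
  frob2 A <= a -> frob2 B <= b -> frob2 C <= c -> frob2 (A *m B *m C) <= a * b * c.
Proof.
move=> Aa Bb Cc; apply: le_trans (frob2M_le _ _) _.
apply: ler_pM (frob2_ge0 _) (frob2_ge0 _) _ Cc.
by apply: le_trans (frob2M_le _ _) _; apply: ler_pM (frob2_ge0 _) (frob2_ge0 _) Aa Bb.
Qed.

Lemma frob2_mxtrace p q (A : 'M[R]_(p, q)) : frob2 A = \tr (A *m A^T).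
Proof.
by apply: eq_bigr => i _; rewrite !mxE; apply: eq_bigr => j _; rewrite !mxE expr2.
Qed.

Lemma frob2_orthogonal p q (P : 'M[R]_p) (Q : 'M[R]_q) (A : 'M[R]_(p, q)) :
  P^T *m P = 1%:M -> Q^T *m Q = 1%:M -> frob2 (P *m A *m Q^T) = frob2 A.
Proof.
move=> orthP orthQ; rewrite !frob2_mxtrace !trmx_mul trmxK.
rewrite -!mulmxA [Q^T *m _]mulmxA orthQ mul1mx.
by rewrite mxtrace_mulC -!mulmxA orthP mulmx1.
Qed.

End Frobenius.

Lemma mulmx2E (R : comPzRingType) a p q b (A : 'M[R]_(a, p)) (M : 'M[R]_(p, q))
    (B : 'M[R]_(q, b)) i j :
  (A *m M *m B) i j = \sum_l \sum_k A i l * B k j * M l k.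
Proof.
rewrite mxE (eq_bigr (fun k => \sum_l A i l * M l k * B k j)); last first.
  by move=> k _; rewrite mxE mulr_suml.
by rewrite exchange_big; apply: eq_bigr => l _; apply: eq_bigr => k _; exact: mulrAC.
Qed.

Section MatrixCalculus.
Variable R : realType.

Lemma is_derive1_sum k (F : 'I_k -> R -> R) (dF : 'I_k -> R) (t : R) :
  (forall i, is_derive t 1 (F i) (dF i)) ->
  is_derive t 1 (fun x => \sum_i F i x) (\sum_i dF i).
Proof. by move=> dF_i; have := is_derive_sum dF_i; rewrite fct_sumE. Qed.

Lemma is_derive_mxP p q (M : R -> 'M[R]_(p, q)) (t : R) (D : 'M[R]_(p, q)) :
  is_derive t 1 M D <-> forall i j, is_derive t 1 (fun x => M x i j) (D i j).
Proof.
split=> [dM i j | dMij].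
- have Mt : derivable M t 1 by case: dM.
  have := derive_mx Mt; rewrite derive_val => ->; rewrite mxE.
  by apply: derivableP; move/derivable_mxP: Mt; apply.
- have Mt : derivable M t 1 by apply/derivable_mxP => i j; case: (dMij i j).
  apply: DeriveDef => //; rewrite derive_mx //.
  by apply/matrixP => i j; rewrite mxE derive_val.
Qed.

Lemma cvg_mxP p q (T : Type) (F : set_system T) {FF : Filter F}
    (M : T -> 'M[R]_(p, q)) (L : 'M[R]_(p, q)) :
  M x @[x --> F] --> L <-> forall i j, M x i j @[x --> F] --> L i j.
Proof.
split=> [ML i j | MLij].
  by apply: (cvg_comp M (fun N => N i j) ML); exact: coord_continuous.
apply/cvgrPdist_le => /= e e0; near=> x.
rewrite /Num.Def.normr /= mx_normrE (bigmax_le _ (ltW e0)) //= => i _.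
rewrite !mxE /=; move: i; near: x; apply: filter_forall => /= i.
exact: ((cvgrPdist_le _ _).1 (MLij i.1 i.2)).
Unshelve. all: by end_near. Qed.

Lemma is_derive_mulmx2 a p q b (A : 'M[R]_(a, p)) (B : 'M[R]_(q, b))
    (M : R -> 'M[R]_(p, q)) (t : R) (D : 'M[R]_(p, q)) :
  is_derive t 1 M D -> is_derive t 1 (fun x => A *m M x *m B) (A *m D *m B).
Proof.
move/is_derive_mxP => dM; apply/is_derive_mxP => i j.
under eq_fun do rewrite mulmx2E.
by rewrite mulmx2E; apply: is_derive1_sum => l; apply: is_derive1_sum.
Qed.

Lemma cvg_mulmx2 a p q b (T : Type) (F : set_system T) {FF : Filter F}
    (A : 'M[R]_(a, p)) (B : 'M[R]_(q, b)) (M : T -> 'M[R]_(p, q)) (L : 'M[R]_(p, q)) :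
  M x @[x --> F] --> L -> A *m M x *m B @[x --> F] --> A *m L *m B.
Proof.
move/cvg_mxP => ML; apply/cvg_mxP => i j.
under eq_fun do rewrite mulmx2E.
rewrite mulmx2E; apply: cvg_big => [|l _]; first exact: add_continuous.
apply: cvg_big => [|k _]; first exact: add_continuous.
exact: cvgM (cvg_cst _) (ML l k).
Qed.

Lemma cvg_frob2 p q (T : Type) (F : set_system T) {FF : Filter F}
    (M : T -> 'M[R]_(p, q)) (L : 'M[R]_(p, q)) :
  M x @[x --> F] --> L -> frob2 (M x) @[x --> F] --> frob2 L.
Proof.
move/cvg_mxP => ML; apply: cvg_big => [|i _]; first exact: add_continuous.
apply: cvg_big => [|j _]; first exact: add_continuous.
exact: cvgM.
Qed.

Lemma is_derive_frob2 p q (M : R -> 'M[R]_(p, q)) (t : R) (D : 'M[R]_(p, q)) :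
  is_derive t 1 M D -> is_derive t 1 (fun x => frob2 (M x)) (2 * frob_dot (M t) D).
Proof.
move/is_derive_mxP => dM.
rewrite mulr_sumr; apply: is_derive1_sum => i.
rewrite mulr_sumr; apply: is_derive1_sum => j.
by apply: is_derive_eq (is_deriveM (dM i j) (dM i j)) _; rewrite /= -mulr2n mulr_natl.
Qed.

End MatrixCalculus.

Section RealCalculus.
Variable R : realType.
Implicit Types (a b t K : R) (f df : R -> R).

Lemma derivable_oy_continuous_within_cc (V : normedModType R) (f : R -> V) a b :
  (forall t, a < t -> derivable f t 1) -> f t @[t --> a^'+] --> f a ->
  {within `[a, b], continuous f}.
Proof.
move=> df fa; have cf : {within `[a, +oo[, continuous f}.
  apply: derivable_oy_Rcontinuous_within_itvcy; split=> // x.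
  by rewrite in_itv /= andbT; apply: df.
by apply: continuous_subspaceW cf => x /=; rewrite !in_itv /= andbT => /andP[].
Qed.

Lemma derive_le0_le f df a b : a <= b ->
  (forall t, a < t -> is_derive t 1 f (df t)) -> (forall t, a < t < b -> df t <= 0) ->
  f t @[t --> a^'+] --> f a -> f b <= f a.
Proof.
move=> ab dfP df_le0 fa; apply: (@ler0_derive1_le_cc _ f a b) => //.
- by move=> x; rewrite in_itv /= => /andP[ax _]; case: (dfP x ax).
- move=> x; rewrite in_itv /= => /andP[ax xb].
  have dfx := dfP x ax; rewrite derive1E derive_val; exact/df_le0/andP.
- by apply: derivable_oy_continuous_within_cc => // t /dfP [].
- by rewrite in_itv /= lexx ab.
- by rewrite in_itv /= lexx ab.
Qed.

Lemma derive0_eq f a b : a <= b -> (forall t, a < t -> is_derive t 1 f 0) ->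
  f t @[t --> a^'+] --> f a -> f b = f a.
Proof.
move=> ab df fa; apply/le_anti/andP; split.
  exact: (derive_le0_le (df := fun=> 0)).
rewrite -lerN2; apply: (derive_le0_le (f := fun t => - f t) (df := fun=> 0)) => //.
- by move=> t /df /is_deriveN; rewrite oppr0.
- exact: cvgN.
Qed.

Lemma is_derive_cvg (V : normedModType R) (f : R -> V) t (df : V) :
  is_derive t 1 f df -> f x @[x --> t] --> f t.
Proof. by case=> /derivable1_diffP /differentiable_continuous. Qed.

Lemma is_derive1M (f g : R -> R) (t df dg : R) :
  is_derive t 1 f df -> is_derive t 1 g dg ->
  is_derive t 1 (fun x => f x * g x) (f t * dg + g t * df).
Proof. exact: is_deriveM. Qed.

Lemma is_derive1_sqr (f : R -> R) (t df : R) :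
  is_derive t 1 f df -> is_derive t 1 (fun x => f x ^+ 2) (2 * f t * df).
Proof. by move=> dft; apply: is_derive_eq (is_derive1M dft dft) _; ring. Qed.

Lemma is_derive_expR_scale K t : is_derive t 1 (fun x => expR (K * x)) (K * expR (K * t)).
Proof.
apply: is_derive_eq (is_derive1_comp (is_derive_expR _) (is_deriveZ K (is_derive_id t 1))) _.
by rewrite /= [_%:A]mulr1 mulrC.
Qed.

Lemma gronwall_le0 (E dE : R -> R) K b : 0 <= b ->
  (forall t, 0 < t -> is_derive t 1 E (dE t)) -> (forall t, 0 < t < b -> dE t <= K * E t) ->
  E t @[t --> 0^'+] --> E 0 -> E 0 = 0 -> E b <= 0.
Proof.
move=> b0 dE_E dE_le E0 E00.
pose dH t := E t * (- K * expR (- K * t)) + expR (- K * t) * dE t.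
have : E b * expR (- K * b) <= E 0 * expR (- K * 0).
  apply: (derive_le0_le (f := fun t => E t * expR (- K * t)) (df := dH)) => //.
  - by move=> t /dE_E dEt; apply: is_derive1M => //; exact: is_derive_expR_scale.
  - by move=> t /dE_le dEt_le; have := expR_gt0 (- K * t); rewrite /dH; nra.
  - apply: cvgM => //; apply: cvg_at_right_filter.
    exact: is_derive_cvg (is_derive_expR_scale _ _).
by rewrite E00 mul0r => Eb_le0; have := expR_gt0 (- K * b); nra.
Qed.

End RealCalculus.

Lemma cvg0_sqr_expR_bounded (R : realType) (f : R -> R) (K c : R) : 0 < c ->
  (forall t, 0 <= t -> f t ^+ 2 * expR (c * t) <= K) -> f t @[t --> +oo] --> 0.
Proof.
move=> c0 bound; have e0 := expR_gt0 (c * 0).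
have K0 : 0 <= K.
  by apply: le_trans (bound 0 (lexx 0)); apply: mulr_ge0 (sqr_ge0 _) (ltW e0).
apply/cvgrPdist_lt => e e_gt0; near=> t.
have t0 : 0 < t by near: t; apply: nbhs_pinfty_gt; rewrite num_real.
have ce0 : 0 < c * e ^+ 2 by rewrite mulr_gt0 // exprn_gt0.
have : K / (c * e ^+ 2) < t by near: t; apply: nbhs_pinfty_gt; rewrite num_real.
rewrite ltr_pdivrMr // => tK.
(* 1 + c t <= exp (c t) turns the bound into f t ^+ 2 <= K / (c t). *)
have := bound t (ltW t0); have := expR_ge1Dx (c * t); have := sqr_ge0 (f t).
have := mulr_gt0 c0 t0 => ct0 f20 exp_ge exp_le.
have f2e : f t ^+ 2 < e ^+ 2 by nra.
rewrite sub0r normrN ltr_norml; apply/andP; split; nra.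
Unshelve. all: by end_near. Qed.

Section ScalarFlow.
Variables (R : realType) (s : R) (y x : R -> R).
Hypothesis dy : forall t : R, 0 < t -> is_derive t 1 y ((s - y t * x t) * x t).
Hypothesis dx : forall t : R, 0 < t -> is_derive t 1 x (y t * (s - y t * x t)).
Hypothesis y_cont0 : y t @[t --> (0 : R)^'+] --> y 0.
Hypothesis x_cont0 : x t @[t --> (0 : R)^'+] --> x 0.

Lemma scalar_flow_balanced t : 0 <= t -> x t ^+ 2 - y t ^+ 2 = x 0 ^+ 2 - y 0 ^+ 2.
Proof.
move=> t0; apply: (derive0_eq (f := fun t => x t ^+ 2 - y t ^+ 2)) => //.
  move=> u u0; have h : is_derive u 1 (fun t => x t ^+ 2 - y t ^+ 2) _ :=
    is_deriveB (is_derive1_sqr (dx u0)) (is_derive1_sqr (dy u0)).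
  by apply: is_derive_eq h _; ring.
by apply: cvgB; apply: cvgM.
Qed.

Lemma scalar_flow_residual t : 0 <= t ->
  (s - y t * x t) ^+ 2 * expR (2 * (x 0 ^+ 2 - y 0 ^+ 2) * t) <= (s - y 0 * x 0) ^+ 2.
Proof.
move=> t0; set c := x 0 ^+ 2 - y 0 ^+ 2; set r := fun t => s - y t * x t.
have dr (u : R) : 0 < u -> is_derive u 1 r (- (r u * (x u ^+ 2 + y u ^+ 2))).
  move=> u0; have h : is_derive u 1 r _ :=
    is_deriveB (is_derive_cst s u 1) (is_derive1M (dy u0) (dx u0)).
  by apply: is_derive_eq h _; rewrite /r; ring.
pose V t := r t ^+ 2 * expR (2 * c * t).
have V_cont0 : V t @[t --> 0^'+] --> V 0.
  have r_cont0 : r t @[t --> 0^'+] --> r 0.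
    by apply: cvgB; [exact: cvg_cst | exact: cvgM].
  apply: cvgM; first exact: cvgM.
  exact: cvg_at_right_filter (is_derive_cvg (is_derive_expR_scale _ _)).
have := @derive_le0_le R V _ 0 t t0 _ _ V_cont0; rewrite /V mulr0 expR0 mulr1; apply.
- by move=> u u0; apply: is_derive1M (is_derive1_sqr (dr u u0)) (is_derive_expR_scale _ _).
- (* r' = - (x^2 + y^2) r and x^2 + y^2 = c + 2 y^2 *)
  move=> u /andP[u0 _]; have bal := scalar_flow_balanced (ltW u0).
  have := expR_gt0 (2 * c * u); set e := expR _ => e0.
  have -> : r u ^+ 2 * (2 * c * e) + e * (2 * r u * - (r u * (x u ^+ 2 + y u ^+ 2))) =
      - (4 * e * (r u * y u) ^+ 2) by rewrite /c -bal; ring.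
  by have := sqr_ge0 (r u * y u); nra.
Qed.

Lemma scalar_flow_cvg : y 0 = 0 -> x 0 != 0 -> y t * x t @[t --> +oo] --> s.
Proof.
move=> y00 x00; have c0 : 0 < 2 * (x 0 ^+ 2 - y 0 ^+ 2).
  by rewrite y00 expr0n subr0 mulr_gt0 // exprn_even_gt0.
have r0 := cvg0_sqr_expR_bounded c0 scalar_flow_residual.
have : s - (s - y t * x t) @[t --> +oo] --> s - 0 by apply: cvgB => //; exact: cvg_cst.
by rewrite subr0; under eq_cvg do rewrite opprB addrC subrK.
Qed.

End ScalarFlow.

Section GradientFlow.
Variable R : realType.

Definition flowY n m r (S : 'M[R]_(n, m)) (Y : 'M[R]_(n, r)) (X : 'M[R]_(r, m)) :=
  (S - Y *m X) *m X^T.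
Definition flowX n m r (S : 'M[R]_(n, m)) (Y : 'M[R]_(n, r)) (X : 'M[R]_(r, m)) :=
  Y^T *m (S - Y *m X).

Definition grad_flow n m r (S : 'M[R]_(n, m))
    (Y : R -> 'M[R]_(n, r)) (X : R -> 'M[R]_(r, m)) :=
  [/\ forall t : R, 0 < t -> is_derive t 1 Y (flowY S (Y t) (X t)),
      forall t : R, 0 < t -> is_derive t 1 X (flowX S (Y t) (X t)),
      Y t @[t --> 0^'+] --> Y 0 & X t @[t --> 0^'+] --> X 0].

Lemma flowX_trmx n m r (S : 'M[R]_(n, m)) (Y : 'M[R]_(n, r)) (X : 'M[R]_(r, m)) :
  flowX S Y X = (flowY S^T X^T Y^T)^T.
Proof. by rewrite /flowX /flowY trmx_mul trmxK [(_ - _)^T]linearB /= trmx_mul !trmxK. Qed.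

Lemma flowY_sub n m r (S : 'M[R]_(n, m)) (Y1 Y2 : 'M[R]_(n, r)) (X1 X2 : 'M[R]_(r, m)) :
  flowY S Y1 X1 - flowY S Y2 X2 = S *m (X1 - X2)^T -
    ((Y1 - Y2) *m X1 *m X1^T + Y2 *m (X1 - X2) *m X1^T + Y2 *m X2 *m (X1 - X2)^T).
Proof.
rewrite /flowY !linearB /= !(mulmxBl, mulmxBr) ?mulmxA !subrKA !opprB.
by rewrite addrACA [in RHS]addrACA [- _ - _]addrC.
Qed.

Lemma flowY_sub_le n m r (S : 'M[R]_(n, m)) (Y1 Y2 : 'M[R]_(n, r))
    (X1 X2 : 'M[R]_(r, m)) (M : R) :
  frob2 Y1 <= M -> frob2 Y2 <= M -> frob2 X1 <= M -> frob2 X2 <= M ->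
  frob2 (flowY S Y1 X1 - flowY S Y2 X2) <=
    8 * (frob2 S + 3 * M ^+ 2) * (frob2 (Y1 - Y2) + frob2 (X1 - X2)).
Proof.
move=> Y1M Y2M X1M X2M; rewrite flowY_sub.
set a := Y1 - Y2; set b := X1 - X2.
have M0 : 0 <= M := le_trans (frob2_ge0 _) Y1M.
have X1tM : frob2 X1^T <= M by rewrite frob2_trmx.
have btb : frob2 b^T <= frob2 b by rewrite frob2_trmx.
have tS : frob2 (S *m b^T) <= frob2 S * frob2 b.
  by rewrite -(frob2_trmx b); exact: frob2M_le.
have t1 := frob2M3_le (lexx (frob2 a)) X1M X1tM.
have t2 := frob2M3_le Y2M (lexx (frob2 b)) X1tM.
have t3 := frob2M3_le Y2M X2M btb.
have s1 := frob2B_le (S *m b^T) (a *m X1 *m X1^T + Y2 *m b *m X1^T + Y2 *m X2 *m b^T).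
have s2 := frob2D_le (a *m X1 *m X1^T + Y2 *m b *m X1^T) (Y2 *m X2 *m b^T).
have s3 := frob2D_le (a *m X1 *m X1^T) (Y2 *m b *m X1^T).
have := frob2_ge0 a; have := frob2_ge0 b; have := frob2_ge0 S.
rewrite expr2; nra.
Qed.

Lemma flowX_sub_le n m r (S : 'M[R]_(n, m)) (Y1 Y2 : 'M[R]_(n, r))
    (X1 X2 : 'M[R]_(r, m)) (M : R) :
  frob2 Y1 <= M -> frob2 Y2 <= M -> frob2 X1 <= M -> frob2 X2 <= M ->
  frob2 (flowX S Y1 X1 - flowX S Y2 X2) <=
    8 * (frob2 S + 3 * M ^+ 2) * (frob2 (Y1 - Y2) + frob2 (X1 - X2)).
Proof.
move=> Y1M Y2M X1M X2M; rewrite !flowX_trmx -linearB frob2_trmx.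
rewrite [frob2 (Y1 - Y2) + _]addrC -(frob2_trmx S).
rewrite -(frob2_trmx (Y1 - Y2)) -(frob2_trmx (X1 - X2)).
by rewrite !linearB; apply: flowY_sub_le; rewrite frob2_trmx.
Qed.

Lemma flow_dot_sub_le n m r (S : 'M[R]_(n, m)) (Y1 Y2 : 'M[R]_(n, r))
    (X1 X2 : 'M[R]_(r, m)) (M : R) :
  frob2 Y1 <= M -> frob2 Y2 <= M -> frob2 X1 <= M -> frob2 X2 <= M ->
  2 * frob_dot (Y1 - Y2) (flowY S Y1 X1 - flowY S Y2 X2) +
  2 * frob_dot (X1 - X2) (flowX S Y1 X1 - flowX S Y2 X2) <=
    (1 + 16 * (frob2 S + 3 * M ^+ 2)) * (frob2 (Y1 - Y2) + frob2 (X1 - X2)).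
Proof.
move=> Y1M Y2M X1M X2M.
have dY := frob_dot_le (Y1 - Y2) (flowY S Y1 X1 - flowY S Y2 X2).
have dX := frob_dot_le (X1 - X2) (flowX S Y1 X1 - flowX S Y2 X2).
have := flowY_sub_le S Y1M Y2M X1M X2M; have := flowX_sub_le S Y1M Y2M X1M X2M.
lra.
Qed.

Lemma grad_flow_bounded n m r (S : 'M[R]_(n, m)) (Y : R -> 'M[R]_(n, r))
    (X : R -> 'M[R]_(r, m)) (T : R) : grad_flow S Y X -> 0 <= T ->
  exists M, forall t, 0 <= t <= T -> frob2 (Y t) <= M /\ frob2 (X t) <= M.
Proof.
case=> dY dX Y0 X0 T0; pose G t := frob2 (Y t) + frob2 (X t).
have G_cont : {within `[0, T], continuous G}.
  apply: derivable_oy_continuous_within_cc => [t t0|].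
    by case: (is_deriveD (is_derive_frob2 (dY t t0)) (is_derive_frob2 (dX t t0))).
  by apply: cvgD; apply: cvg_frob2.
have [c _ Gc] := EVT_max T0 G_cont; exists (G c) => t tT.
have := Gc t; rewrite in_itv /= => /(_ tT); rewrite /G.
by have := frob2_ge0 (Y t); have := frob2_ge0 (X t); split; lra.
Qed.

Lemma grad_flow_unique n m r (S : 'M[R]_(n, m)) (Y1 Y2 : R -> 'M[R]_(n, r))
    (X1 X2 : R -> 'M[R]_(r, m)) :
  grad_flow S Y1 X1 -> grad_flow S Y2 X2 -> Y1 0 = Y2 0 -> X1 0 = X2 0 ->
  forall t, 0 <= t -> Y1 t = Y2 t /\ X1 t = X2 t.
Proof.
move=> flow1 flow2 eY0 eX0 T T0.
have [M1 bound1] := grad_flow_bounded flow1 T0.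
have [M2 bound2] := grad_flow_bounded flow2 T0.
case: flow1 => dY1 dX1 cY1 cX1; case: flow2 => dY2 dX2 cY2 cX2.
pose M := Num.max M1 M2; pose K := 1 + 16 * (frob2 S + 3 * M ^+ 2).
pose E t := frob2 (Y1 t - Y2 t) + frob2 (X1 t - X2 t).
pose dE t := 2 * frob_dot (Y1 t - Y2 t) (flowY S (Y1 t) (X1 t) - flowY S (Y2 t) (X2 t)) +
             2 * frob_dot (X1 t - X2 t) (flowX S (Y1 t) (X1 t) - flowX S (Y2 t) (X2 t)).
have : E T <= 0.
  apply: (@gronwall_le0 R E dE K T) => //.
  - move=> t t0; exact: is_deriveD (is_derive_frob2 (is_deriveB (dY1 t t0) (dY2 t t0)))
                                   (is_derive_frob2 (is_deriveB (dX1 t t0) (dX2 t t0))).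
  - move=> t /andP[t0 tT]; have tT' : 0 <= t <= T by rewrite ltW // ltW.
    have [Y1M X1M] := bound1 t tT'; have [Y2M X2M] := bound2 t tT'.
    by apply: flow_dot_sub_le; rewrite le_max ?Y1M ?Y2M ?X1M ?X2M ?orbT.
  - by apply: cvgD; apply: cvg_frob2; apply: cvgB.
  - by rewrite /E eY0 eX0 !subrr !frob2_0 addr0.
rewrite /E => ET; have := frob2_ge0 (Y1 T - Y2 T); have := frob2_ge0 (X1 T - X2 T).
by split; apply/eqP; rewrite -subr_eq0; apply/eqP/frob2_le0; lra.
Qed.

End GradientFlow.

Lemma mulmx_orth_cancel (R : pzRingType) a p q k b (A : 'M[R]_(a, p)) (B : 'M[R]_(p, q))
    (Q : 'M[R]_q) (C : 'M[R]_(q, k)) (D : 'M[R]_(k, b)) :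
  Q^T *m Q = 1%:M -> A *m B *m Q^T *m (Q *m C *m D) = A *m (B *m C) *m D.
Proof. by move=> orthQ; rewrite !mulmxA -[A *m B *m Q^T *m Q]mulmxA orthQ mulmx1. Qed.

Section Equivariance.
Variables (R : realType) (n m r : nat) (P : 'M[R]_n) (Q : 'M[R]_r) (Z : 'M[R]_m).
Hypotheses (orthP : P^T *m P = 1%:M) (orthQ : Q^T *m Q = 1%:M) (orthZ : Z^T *m Z = 1%:M).

Lemma flowY_conj (S : 'M[R]_(n, m)) (Y : 'M[R]_(n, r)) (X : 'M[R]_(r, m)) :
  flowY (P *m S *m Z^T) (P *m Y *m Q^T) (Q *m X *m Z^T) = P *m flowY S Y X *m Q^T.
Proof.
rewrite /flowY mulmx_orth_cancel // -mulmxBl -mulmxBr !trmx_mul !trmxK [Z *m _]mulmxA.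
by rewrite mulmx_orth_cancel.
Qed.

Lemma flowX_conj (S : 'M[R]_(n, m)) (Y : 'M[R]_(n, r)) (X : 'M[R]_(r, m)) :
  flowX (P *m S *m Z^T) (P *m Y *m Q^T) (Q *m X *m Z^T) = Q *m flowX S Y X *m Z^T.
Proof.
rewrite /flowX mulmx_orth_cancel // -mulmxBl -mulmxBr !trmx_mul !trmxK -!mulmxA.
by rewrite (mulmxA P^T) orthP mul1mx.
Qed.

Lemma grad_flow_conj (S : 'M[R]_(n, m))
    (Y : R -> 'M[R]_(n, r)) (X : R -> 'M[R]_(r, m)) :
  grad_flow S Y X ->
  grad_flow (P *m S *m Z^T) (fun t => P *m Y t *m Q^T) (fun t => Q *m X t *m Z^T).
Proof.
case=> dY dX cY cX; split=> [t t0 | t t0 | |].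
- by rewrite flowY_conj; apply: is_derive_mulmx2; apply: dY.
- by rewrite flowX_conj; apply: is_derive_mulmx2; apply: dX.
- exact: cvg_mulmx2.
- exact: cvg_mulmx2.
Qed.

End Equivariance.

Lemma grad_flow_orth_coord (R : realType) n m r (U : 'M[R]_n) (V : 'M[R]_m)
    (S W : 'M[R]_(n, m)) (Y : R -> 'M[R]_(n, r)) (X : R -> 'M[R]_(r, m)) :
  U^T *m U = 1%:M -> V^T *m V = 1%:M -> W = U *m S *m V^T -> grad_flow W Y X ->
  grad_flow S (fun t => U^T *m Y t) (fun t => X t *m V).
Proof.
move=> orthU orthV WE flow.
have orthUt : U^T^T *m U^T = 1%:M by rewrite trmxK; apply: mulmx1C.
have orthVt : V^T^T *m V^T = 1%:M by rewrite trmxK; apply: mulmx1C.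
have orth1 : (1%:M : 'M[R]_r)^T *m 1%:M = 1%:M by rewrite trmx1 mulmx1.
have := grad_flow_conj orthUt orth1 orthVt flow.
rewrite WE trmxK !mulmxA orthU mul1mx -mulmxA orthV mulmx1 trmx1.
by under eq_fun do rewrite mulmx1; under [X in grad_flow _ _ X]eq_fun do rewrite mul1mx.
Qed.

Section RectangularDiagonal.
Variable R : numDomainType.

Definition rdiagonal p q (M : 'M[R]_(p, q)) : Prop :=
  forall (i : 'I_p) (j : 'I_q), (i : nat) != j -> M i j = 0.

Definition rdiag_mx p q (d : nat -> R) : 'M[R]_(p, q) :=
  \matrix_(i, j) if (i : nat) == j then d i else 0.

Definition sgn_mx (p k : nat) : 'M[R]_k := diag_mx (\row_(i < k) (-1) ^+ (i == p :> nat)).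

Lemma rdiagonal_rdiag_mx p q (d : nat -> R) : rdiagonal (rdiag_mx p q d).
Proof. by move=> i j /negbTE ij; rewrite mxE ij. Qed.

Lemma rdiagonal0 p q : rdiagonal (0 : 'M[R]_(p, q)).
Proof. by move=> i j _; rewrite mxE. Qed.

Lemma rdiagonalB p q (A B : 'M[R]_(p, q)) : rdiagonal A -> rdiagonal B -> rdiagonal (A - B).
Proof. by move=> dA dB i j ij; rewrite !mxE dA // dB // subrr. Qed.

Lemma rdiagonal_trmx p q (A : 'M[R]_(p, q)) : rdiagonal A -> rdiagonal A^T.
Proof. by move=> dA i j ij; rewrite mxE dA // eq_sym. Qed.

Lemma rdiagonal_mulE p q k (A : 'M[R]_(p, q)) (B : 'M[R]_(q, k))
    (i : 'I_p) (l : 'I_q) (j : 'I_k) :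
  rdiagonal A -> (i : nat) = l -> (A *m B) i j = A i l * B l j.
Proof.
move=> dA il; rewrite mxE (bigD1 l) //= big1 ?addr0 // => l' l'l.
by rewrite dA ?mul0r // il; apply: contra l'l => /eqP/val_inj ->.
Qed.

Lemma rdiagonal_mul_out p q k (A : 'M[R]_(p, q)) (B : 'M[R]_(q, k))
    (i : 'I_p) (j : 'I_k) :
  rdiagonal A -> (q <= i)%N -> (A *m B) i j = 0.
Proof.
move=> dA qi; rewrite mxE big1 // => l _.
by rewrite dA ?mul0r // neq_ltn (leq_trans (ltn_ord l) qi) orbT.
Qed.

Lemma rdiagonal_mul p q k (A : 'M[R]_(p, q)) (B : 'M[R]_(q, k)) :
  rdiagonal A -> rdiagonal B -> rdiagonal (A *m B).
Proof.
move=> dA dB i j ij; have [iq|qi] := ltnP i q; last exact: rdiagonal_mul_out.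
by rewrite (@rdiagonal_mulE _ _ _ _ _ _ (Ordinal iq)) // dB ?mulr0.
Qed.

Lemma sgn_mx_orth p k : (sgn_mx p k)^T *m sgn_mx p k = 1%:M.
Proof.
rewrite tr_diag_mx mul_diag_mx; apply/matrixP => i j; rewrite !mxE.
by case: (i == j); rewrite ?mulr1n ?mulr0n ?mulr0 // -expr2 sqrr_sign.
Qed.

Lemma sgn_mx_conjE p a b (M : 'M[R]_(a, b)) (i : 'I_a) (j : 'I_b) :
  (sgn_mx p a *m M *m (sgn_mx p b)^T) i j =
    (-1) ^+ (i == p :> nat) * (-1) ^+ (j == p :> nat) * M i j.
Proof. by rewrite tr_diag_mx mul_mx_diag mul_diag_mx !mxE mulrAC. Qed.

Lemma rdiagonal_sgnP a b (M : 'M[R]_(a, b)) :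
  rdiagonal M <-> forall p, sgn_mx p a *m M *m (sgn_mx p b)^T = M.
Proof.
split=> [dM p | fixM i j ij].
  apply/matrixP => i j; rewrite sgn_mx_conjE.
  have [ij|/dM ->] := eqVneq (i : nat) j; last by rewrite mulr0.
  by rewrite ij -expr2 sqrr_sign mul1r.
have := congr1 (fun N : 'M[R]_(a, b) => N i j) (fixM i).
rewrite /= sgn_mx_conjE eqxx eq_sym (negbTE ij) expr1 expr0 mulr1 mulN1r.
move=> Mij; have /eqP : M i j *+ 2 = 0 by rewrite mulr2n -{1}Mij addNr.
by rewrite mulrn_eq0 => /eqP.
Qed.

End RectangularDiagonal.

Arguments rdiag_mx {R p q}.
Arguments sgn_mx {R}.
Arguments rdiagonal_rdiag_mx {R p q}.

Section DiagonalFlow.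
Variables (R : realType) (n m r : nat) (s : nat -> R).

Lemma grad_flow_rdiagonal (S : 'M[R]_(n, m))
    (Y : R -> 'M[R]_(n, r)) (X : R -> 'M[R]_(r, m)) :
  rdiagonal S -> grad_flow S Y X -> rdiagonal (Y 0) -> rdiagonal (X 0) ->
  forall t, 0 <= t -> rdiagonal (Y t) /\ rdiagonal (X t).
Proof.
move=> /rdiagonal_sgnP dS flow /rdiagonal_sgnP dY0 /rdiagonal_sgnP dX0 t t0.
(* A sign flip maps the solution to a solution with the same data. *)
have fixed p : sgn_mx p n *m Y t *m (sgn_mx p r)^T = Y t /\
               sgn_mx p r *m X t *m (sgn_mx p m)^T = X t.
  have flow_p : grad_flow S (fun t => sgn_mx p n *m Y t *m (sgn_mx p r)^T)
                            (fun t => sgn_mx p r *m X t *m (sgn_mx p m)^T).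
    by rewrite -{1}(dS p); apply: grad_flow_conj => //; exact: sgn_mx_orth.
  exact: grad_flow_unique flow_p flow (dY0 p) (dX0 p) t t0.
by split; apply/rdiagonal_sgnP => p; case: (fixed p).
Qed.

Lemma rdiag_mx_sub_mulE (Y : 'M[R]_(n, r)) (X : 'M[R]_(r, m))
    (a : 'I_n) (k : 'I_r) (b : 'I_m) :
  rdiagonal Y -> (a : nat) = k -> (k : nat) = b ->
  (rdiag_mx s - Y *m X) a b = s k - Y a k * X k b.
Proof. by move=> dY ak kb; rewrite -(rdiagonal_mulE _ _ dY ak) !mxE ak kb eqxx -kb. Qed.

Lemma flowY_rdiagE (Y : 'M[R]_(n, r)) (X : 'M[R]_(r, m))
    (a : 'I_n) (k : 'I_r) (b : 'I_m) :
  rdiagonal Y -> rdiagonal X -> (a : nat) = k -> (k : nat) = b ->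
  flowY (rdiag_mx s) Y X a k = (s k - Y a k * X k b) * X k b.
Proof.
move=> dY dX ak kb; have dD : rdiagonal (rdiag_mx s - Y *m X).
  by apply: rdiagonalB; [exact: rdiagonal_rdiag_mx | exact: rdiagonal_mul].
have ab : (a : nat) = b by rewrite ak.
by rewrite /flowY (rdiagonal_mulE _ _ dD ab) (rdiag_mx_sub_mulE _ dY ak kb) mxE.
Qed.

Lemma flowX_rdiagE (Y : 'M[R]_(n, r)) (X : 'M[R]_(r, m))
    (a : 'I_n) (k : 'I_r) (b : 'I_m) :
  rdiagonal Y -> (a : nat) = k -> (k : nat) = b ->
  flowX (rdiag_mx s) Y X k b = Y a k * (s k - Y a k * X k b).
Proof.
move=> dY ak kb; have dYt := rdiagonal_trmx dY.
by rewrite /flowX (rdiagonal_mulE _ _ dYt (esym ak)) (rdiag_mx_sub_mulE _ dY ak kb) mxE.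
Qed.

Lemma grad_flow_rdiag_cvg (Y : R -> 'M[R]_(n, r)) (X : R -> 'M[R]_(r, m)) :
  grad_flow (rdiag_mx s) Y X -> Y 0 = 0 -> rdiagonal (X 0) ->
  (forall (k : 'I_r) (j : 'I_m), (k : nat) = j -> X 0 k j != 0) ->
  Y t *m X t @[t --> +oo] --> rdiag_mx (fun k => if (k < r)%N then s k else 0).
Proof.
move=> flow Y00 dX0 X0_nz.
have dY0 : rdiagonal (Y 0) by rewrite Y00; exact: rdiagonal0.
have diag (t : R) : 0 <= t -> rdiagonal (Y t) /\ rdiagonal (X t).
  exact: grad_flow_rdiagonal (rdiagonal_rdiag_mx s) flow dY0 dX0 t.
have diag_near : \forall t \near +oo, rdiagonal (Y t) /\ rdiagonal (X t).
  exact: filterS diag (nbhs_pinfty_ge (num_real 0)).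
case: flow => dY dX cY cX; apply/cvg_mxP => a b; rewrite mxE.
have [ab|ab] := eqVneq (a : nat) b; last first.
  apply: cvg_near_cst; near=> t.
  have [dYt dXt] : rdiagonal (Y t) /\ rdiagonal (X t) by near: t.
  exact: rdiagonal_mul.
have [ar|ra] := ltnP a r; last first.
  apply: cvg_near_cst; near=> t.
  have [dYt _] : rdiagonal (Y t) /\ rdiagonal (X t) by near: t.
  exact: rdiagonal_mul_out.
pose k := Ordinal ar; have ak : (a : nat) = k by []; have kb : (k : nat) = b by [].
have yx_cvg : Y t a k * X t k b @[t --> +oo] --> s k.
  apply: (scalar_flow_cvg (y := fun t => Y t a k) (x := fun t => X t k b)) => /=.
  - move=> t t0; have [dYt dXt] := diag t (ltW t0).
    by rewrite -(flowY_rdiagE dYt dXt ak kb); exact: (is_derive_mxP _ _ _).1 (dY t t0) a k.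
  - move=> t t0; have [dYt _] := diag t (ltW t0).
    by rewrite -(flowX_rdiagE _ dYt ak kb); exact: (is_derive_mxP _ _ _).1 (dX t t0) k b.
  - exact: (cvg_mxP _ _).1 cY a k.
  - exact: (cvg_mxP _ _).1 cX k b.
  - by rewrite Y00 mxE.
  - exact: X0_nz.
apply: cvg_trans yx_cvg; apply: near_eq_cvg; near=> t.
have [dYt _] : rdiagonal (Y t) /\ rdiagonal (X t) by near: t.
by rewrite /= (rdiagonal_mulE _ _ dYt ak).
Unshelve. all: by end_near. Qed.

End DiagonalFlow.

Lemma rdiag_mxB (R : numDomainType) p q (d1 d2 : nat -> R) :
  rdiag_mx d1 - rdiag_mx d2 = rdiag_mx (fun k => d1 k - d2 k) :> 'M[R]_(p, q).
Proof. by apply/matrixP => i j; rewrite !mxE; case: eqP; rewrite ?subrr. Qed.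

Lemma frob2_rdiag_mx (R : realType) p q (d : nat -> R) :
  frob2 (rdiag_mx d : 'M[R]_(p, q)) = \sum_(k < minn p q) d k ^+ 2.
Proof.
rewrite (big_ord_widen_cond p xpredT (fun k => d k ^+ 2) (geq_minl p q)) big_mkcond.
apply: eq_bigr => i _.
rewrite leq_min ltn_ord /=; have [iq|qi] := ltnP i q.
  rewrite (bigD1 (Ordinal iq)) //= big1 ?addr0 => [|j ji]; rewrite mxE ?eqxx //.
  by rewrite ifN ?expr0n //; apply: contra ji => /eqP ij; apply/eqP/val_inj.
rewrite big1 // => j _; rewrite mxE ifN ?expr0n //.
by rewrite neq_ltn (leq_trans (ltn_ord j) qi) orbT.
Qed.

Lemma mulmx_sum_outer (R : comPzRingType) p q (U : 'M[R]_p) (V : 'M[R]_q) (A : 'M[R]_(p, q)) :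
  U *m A *m V^T = \sum_i \sum_j A i j *: (col i U *m (col j V)^T).
Proof.
apply/matrixP => a b; rewrite mulmx2E summxE; under [RHS]eq_bigr do rewrite summxE.
apply: eq_bigr => i _; apply: eq_bigr => j _.
by rewrite !mxE big_ord1 !mxE mulrC mulrA.
Qed.

Lemma frob2_rdiag_mx_truncB (R : realType) p q r (s : nat -> R) :
  frob2 (rdiag_mx s - rdiag_mx (fun k => if (k < r)%N then s k else 0) : 'M[R]_(p, q)) =
  \sum_(k < minn p q | (r <= k)%N) s k ^+ 2.
Proof.
rewrite rdiag_mxB frob2_rdiag_mx [RHS]big_mkcond; apply: eq_bigr => k _.
by case: ltnP => _; rewrite ?subrr ?subr0 // expr2 mulr0.
Qed.

Lemma mulmx_rdiag_mx_trunc (R : numDomainType) p q r (U : 'M[R]_p) (V : 'M[R]_q)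
    (s : nat -> R) :
  U *m rdiag_mx (fun k => if (k < r)%N then s k else 0) *m V^T =
  \sum_(i < p) \sum_(j < q | ((i : nat) == j) && (i < r)%N) s i *: (col i U *m (col j V)^T).
Proof.
rewrite mulmx_sum_outer; apply: eq_bigr => i _.
rewrite [RHS]big_mkcond; apply: eq_bigr => j _.
by rewrite mxE; case: eqP => _ /=; [case: ltnP => _ |]; rewrite ?scale0r.
Qed.

Unset Implicit Arguments.

Theorem theorem2p11 (R : realType) (n m r : nat) (W0 : 'M[R]_(n, m))
  (U : 'M[R]_n) (V : 'M[R]_m) (s : nat -> R) (Xt0 : 'M[R]_(r, m))
  (Y : R -> 'M[R]_(n, r)) (X : R -> 'M[R]_(r, m)) :
  (1 <= r)%N -> (r < \rank W0)%N ->
  (* singular value decomposition W0 = U Sigma0 V^T *)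
  U^T *m U = 1%:M -> V^T *m V = 1%:M ->
  (forall k : nat, (k < minn n m)%N -> 0 <= s k) ->
  (forall k l : nat, (k <= l)%N -> (l < minn n m)%N -> s l <= s k) ->
  W0 = U *m (\matrix_(i < n, j < m) if (i : nat) == j then s i else 0) *m V^T ->
  (* boundedness of the LoRA gradient-descent iterates *)
  lora_gd_bounded W0 0 (Xt0 *m V^T) ->
  (* spectral-type initialization *)
  (forall (i : 'I_r) (j : 'I_m), (i : nat) != j -> Xt0 i j = 0) ->
  (forall (i : 'I_r) (j : 'I_m), (i : nat) = j -> Xt0 i j != 0) ->
  (* gradient flow on [0, +oo) *)
  (forall t : R, 0 < t -> is_derive t 1 Y ((W0 - Y t *m X t) *m (X t)^T)) ->
  (forall t : R, 0 < t -> is_derive t 1 X ((Y t)^T *m (W0 - Y t *m X t))) ->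
  Y t @[t --> 0^'+] --> Y 0 -> X t @[t --> 0^'+] --> X 0 ->
  Y 0 = 0 -> X 0 = Xt0 *m V^T ->
  (Y t *m X t @[t --> +oo] -->
     \sum_(i < n) \sum_(j < m | ((i : nat) == j) && (i < r)%N)
        s i *: (col i U *m (col j V)^T))
  /\
  (frob2 (W0 - Y t *m X t) @[t --> +oo] -->
     \sum_(k < minn n m | (r <= k)%N) s k ^+ 2).
Proof.
move=> _ _ orthU orthV _ _ W0E _ Xt0_off Xt0_diag dY dX cY cX Y00 X00.
have flow := grad_flow_orth_coord orthU orthV W0E (And4 dY dX cY cX).
have lim : (U^T *m Y t) *m (X t *m V) @[t --> +oo] -->
             rdiag_mx (fun k => if (k < r)%N then s k else 0).
  apply: (grad_flow_rdiag_cvg flow) => /=; rewrite ?Y00 ?mulmx0 //;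
    by rewrite X00 -mulmxA orthV mulmx1.
have YXE t : Y t *m X t = U *m ((U^T *m Y t) *m (X t *m V)) *m V^T.
  by rewrite !mulmxA (mulmx1C orthU) mul1mx -mulmxA (mulmx1C orthV) mulmx1.
split.
  by rewrite (eq_cvg _ _ YXE) -mulmx_rdiag_mx_trunc; exact: cvg_mulmx2.
have FE t : frob2 (W0 - Y t *m X t) = frob2 (rdiag_mx s - (U^T *m Y t) *m (X t *m V)).
  by rewrite YXE W0E -mulmxBl -mulmxBr frob2_orthogonal.
rewrite (eq_cvg _ _ FE) -frob2_rdiag_mx_truncB.
by apply: cvg_frob2; apply: cvgB => //; exact: cvg_cst.
Qed.
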